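(* Let $\mathcal N$ be an $(M,N,q)$-Schreier norming set. Let $k\ge2$ and let $a_1,\dots,a_{k-1}$ be non-negative integers, not all zero. If $x_1^*,\dots,x_t^*\in\mathcal N$ is an $S_{\sum_{\ell<k}a_\ell n_{2\ell}}$-admissible block sequence and $(\beta_i)_{i=1}^t\in Ba(\ell_q)$, then $$\frac{1}{\prod_{\ell<k}m_{2\ell}^{a_\ell}}\sum_{i=1}^t\beta_ix_i^*\in\mathcal N.$$
   Context: Notation. $c_{00}$ is the space of finitely supported real sequences, $(e_i)_{i\ge1}$ its unit vector basis and $(e_i^* )_{i\ge1}$ the biorthogonal functionals. For a functional $x^*=\sum_i a_ie_i^*$, ${\rm supp}\,x^*=\{i:a_i\neq0\}$. For finite $E,F\subset\mathbb N$, $E<F$ means $\max E<\min F$. $Ba(\ell_q)$ is the closed unit ball of $\ell_q$ (applied to finite scalar sequences). For an interval $E\subset\mathbb N$, $Ex^*$ is the restriction of $x^*$ to the coordinates in $E$. Schreier families: $S_0=\{\{n\}:n\in\mathbb N\}\cup\{\emptyset\}$ and $S_{n+1}=\{\bigcup_{i=1}^mF_i: m\in\mathbb N,\ F_i\in S_n,\ m\le\min F_1,\ F_1<\dots<F_m\}\cup\{\emptyset\}$. Successive finite sets $E_1<\dots<E_k$ are $S_n$-admissible if $\{\min E_1,\dots,\min E_k\}\in S_n$; a finite block sequence $x_1^*,\dots,x_k^*$ (${\rm supp}\,x_1^*<\dots<{\rm supp}\,x_k^*$) is $S_n$-admissible if $({\rm supp}\,x_i^* )_{i=1}^k$ is.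 Sequences. $M=(m_i)$, $N=(n_i)$ are increasing sequences of positive integers such that (i) $m_1>3$, $m_2=m_1^5$, $m_{2j+1}=m_{2j}^5$ for $j\ge1$, and there is an increasing sequence $(s_i)$ of positive integers with $m_{2j}=\prod_{i=1}^{j-1}m_{2i}^{s_i}$ for $j\ge2$; (ii) defining for $j\ge2$ $f_j=\max\{\rho n_1+\sum_{1\le i<j}\rho_in_{2i}:\ \rho,\rho_i\in\mathbb N\cup\{0\},\ m_1^{\rho}\prod_{1\le i<j}m_{2i}^{\rho_i}<m_{2j}\}$, one has $4f_j<n_{2j}$ for all $j\ge2$, and $5n_1<n_2$. Norming sets. A set $\mathcal N\subset{\rm span}\{e_i^*\}$ is norming if it contains every $e_n^*$, satisfies $|x^*(e_n)|\le1$ for all $x^*\in\mathcal N$, $n\in\mathbb N$, is symmetric, and $Ex^*\in\mathcal N$ for all $x^*\in\mathcal N$ and intervals $E\subset\mathbb N$. $(M,N,q)$-Schreier. Let $1<p,q<\infty$, $1/p+1/q=1$. For $k\ge1$ let $\mathcal N_k$ be the set of all $\frac1{m_{2k}}\sum_{i=1}^d\gamma_ix_i^*$ where $d\in\mathbb N$, $(\gamma_i)_{i=1}^d\in Ba(\ell_q)$, and $x_1^*,\dots,x_d^*\in\mathcal N$ is an $S_{n_{2k}}$-admissible block sequence. Let $\mathcal N^q_\infty$ be the union over $k\ge0$ of the sets of all $\frac1{m_{2k+1}}\sum_{i=1}^d\gamma_iEx_i^*$ where $(\gamma_i)\in 2^{1/p}Ba(\ell_q)$, $E$ is an interval of $\mathbb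 N$, $x_1^*,\dots,x_d^*$ is an $S_{n_{2k+1}}$-admissible block sequence with $x_i^*\in\mathcal N_{j_i}$ and $j_1,\dots,j_d$ pairwise distinct. A norming set $\mathcal N$ is $(M,N,q)$-Schreier if $\mathcal N_j\subset\mathcal N$ for all $j\ge1$ and $\mathcal N\subset\bigcup_{j\ge1}\mathcal N_j\cup\mathcal N^q_\infty\cup\{\pm e_n^*:n\in\mathbb N\}$. *)

From Stdlib Require Import Reals Lra Lia List Sorted Arith.
Import ListNotations.
Open Scope R_scope.

(** Functionals in span{e_i^*}: functions nat -> R, coordinates indexed by
    n >= 1 (coordinate 0 is unused and required to be 0). *)
Definition functional := nat -> R.

Definition fin_supp (x : functional) : Prop :=
  x 0%nat = 0 /\ exists n : nat, forall i, (n < i)%nat -> x i = 0.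

Definition ecoord (n : nat) : functional := fun i => if Nat.eqb i n then 1 else 0.

Definition restrict (a b : nat) (x : functional) : functional :=
  fun i => if andb (Nat.leb a i) (Nat.leb i b) then x i else 0.

(** finite sums / products over naturals, i ranging over lo, ..., lo+len-1 *)
Definition nsum (lo len : nat) (f : nat -> nat) : nat :=
  fold_right Nat.add 0%nat (map f (seq lo len)).
Definition nprod (lo len : nat) (f : nat -> nat) : nat :=
  fold_right Nat.mul 1%nat (map f (seq lo len)).

(** Schreier families, finite subsets of N = {1,2,...} represented by
    strictly increasing lists. *)
Fixpoint Schreier (n : nat) (L : list nat) : Prop :=
  match n with
  | O => L = [] \/ exists a, (1 <= a)%nat /\ L = [a]
  | S n' => L = [] \/
      (Sorted lt L /\
       exists Fs : list (list nat),
         Forall (fun F => F <> [] /\ Schreier n' F) Fs /\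
         concat Fs = L /\ (length Fs <= hd 0%nat L)%nat)
  end.

(** |g|^q, with |0|^q = 0 *)
Definition powabs (q g : R) : R :=
  if Req_EM_T g 0 then 0 else Rpower (Rabs g) q.

Definition Ba (q : R) (gs : list R) : Prop :=
  fold_right Rplus 0 (map (powabs q) gs) <= 1.

Definition cBa (c q : R) (gs : list R) : Prop :=
  exists gs', Ba q gs' /\ gs = map (Rmult c) gs'.

Definition lin_comb (gs : list R) (xs : list functional) : functional :=
  fun n => fold_right Rplus 0 (map (fun gx => fst gx * snd gx n) (combine gs xs)).

(** block sequence: supp x_i < supp x_j for i < j (empty supports impose nothing) *)
Definition block (xs : list functional) : Prop :=
  forall i j a b, (i < j < length xs)%nat ->
    nth i xs (fun _ => 0) a <> 0 -> nth j xs (fun _ => 0) b <> 0 -> (a < b)%nat.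

Inductive MinsList : list functional -> list nat -> Prop :=
| ML_nil : MinsList [] []
| ML_zero : forall x xs L, (forall i, x i = 0) -> MinsList xs L -> MinsList (x :: xs) L
| ML_min : forall x xs L m, x m <> 0 -> (forall i, (i < m)%nat -> x i = 0) ->
    MinsList xs L -> MinsList (x :: xs) (m :: L).

Definition admissible (n : nat) (xs : list functional) : Prop :=
  exists L, MinsList xs L /\ Schreier n L.

Definition norming (Ns : functional -> Prop) : Prop :=
  (forall x, Ns x -> fin_supp x) /\
  (forall n, (1 <= n)%nat -> Ns (ecoord n)) /\
  (forall x n, Ns x -> Rabs (x n) <= 1) /\
  (forall x, Ns x -> Ns (fun i => - x i)) /\
  (forall x a b, Ns x -> Ns (restrict a b x)).

Definition Nk (q : R) (M Nn : nat -> nat) (Ns : functional -> Prop) (k : nat)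
  (y : functional) : Prop :=
  exists (gs : list R) (xs : list functional),
    (1 <= length xs)%nat /\ length gs = length xs /\ Ba q gs /\
    Forall Ns xs /\ block xs /\ admissible (Nn (2 * k)%nat) xs /\
    y = (fun i => / INR (M (2 * k)%nat) * lin_comb gs xs i).

Definition Ninf (p q : R) (M Nn : nat -> nat) (Ns : functional -> Prop)
  (y : functional) : Prop :=
  exists (k : nat) (gs : list R) (xs : list functional) (js : list nat) (a b : nat),
    (1 <= length xs)%nat /\ length gs = length xs /\ length js = length xs /\
    cBa (Rpower 2 (/ p)) q gs /\
    block xs /\ admissible (Nn (2 * k + 1)%nat) xs /\
    NoDup js /\
    Forall2 (fun j x => (1 <= j)%nat /\ Nk q M Nn Ns j x) js xs /\
    y = (fun i => / INR (M (2 * k + 1)%nat) * lin_comb gs (map (restrict a b) xs) i).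

Definition MNq_Schreier (p q : R) (M Nn : nat -> nat) (Ns : functional -> Prop) : Prop :=
  norming Ns /\
  (forall j y, (1 <= j)%nat -> Nk q M Nn Ns j y -> Ns y) /\
  (forall y, Ns y ->
     (exists j, (1 <= j)%nat /\ Nk q M Nn Ns j y) \/
     Ninf p q M Nn Ns y \/
     (exists n, (1 <= n)%nat /\ (y = ecoord n \/ y = (fun i => - ecoord n i)))).

Definition fj_cond (M : nat -> nat) (j rho : nat) (rhos : nat -> nat) : Prop :=
  (M 1%nat ^ rho * nprod 1 (j - 1) (fun i => M (2 * i)%nat ^ rhos i) < M (2 * j)%nat)%nat.
Definition fj_val (Nn : nat -> nat) (j rho : nat) (rhos : nat -> nat) : nat :=
  (rho * Nn 1%nat + nsum 1 (j - 1) (fun i => rhos i * Nn (2 * i)%nat))%nat.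

Definition is_fj (M Nn : nat -> nat) (j f : nat) : Prop :=
  (exists rho rhos, fj_cond M j rho rhos /\ f = fj_val Nn j rho rhos) /\
  (forall rho rhos, fj_cond M j rho rhos -> (fj_val Nn j rho rhos <= f)%nat).

(** standing conditions (i), (ii) on M = (m_i), N = (n_i), indexed from 1 *)
Definition MN_cond (M Nn : nat -> nat) : Prop :=
  (forall i, (1 <= i)%nat -> (0 < M i)%nat /\ (M i < M (i + 1))%nat) /\
  (forall i, (1 <= i)%nat -> (0 < Nn i)%nat /\ (Nn i < Nn (i + 1))%nat) /\
  (3 < M 1%nat)%nat /\ M 2%nat = (M 1%nat ^ 5)%nat /\
  (forall j, (1 <= j)%nat -> M (2 * j + 1)%nat = (M (2 * j)%nat ^ 5)%nat) /\
  (exists s : nat -> nat,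
     (forall i, (1 <= i)%nat -> (0 < s i)%nat /\ (s i < s (i + 1))%nat) /\
     (forall j, (2 <= j)%nat ->
        M (2 * j)%nat = nprod 1 (j - 1) (fun i => M (2 * i)%nat ^ s i)%nat)) /\
  (forall j, (2 <= j)%nat -> exists f, is_fj M Nn j f /\ (4 * f < Nn (2 * j)%nat)%nat) /\
  (5 * Nn 1%nat < Nn 2%nat)%nat.

From Stdlib Require Import Reals Lra Lia List Sorted Arith FunctionalExtensionality.
Import ListNotations.
Open Scope R_scope.

(** Say that [Ns] is closed under the pair (D, P) when it contains every
    functional (1/P) sum_i beta_i x_i^* with x_1^*, ..., x_t^* an
    S_D-admissible block sequence in [Ns] and (beta_i) in Ba(l_q).  The
    axiom N_j ⊆ Ns says exactly that [Ns] is closed under (n_{2j}, m_{2j}).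
    The heart of the argument is a multiplication step: closure under (D, P)
    implies closure under (n_{2j} + D, m_{2j} P).  To prove it, discard the
    terms with vanishing coefficient or functional, split the remaining
    admissible set (a member of S_{n_{2j}+D}) into an S_{n_{2j}}-admissible
    family of S_D sets, normalise each corresponding chunk of the sum by the
    l_q norm of its coefficients to get a functional of [Ns] (closure under
    (D, P)), and recombine the chunks with those norms as coefficients,
    which is an element of N_j.  Iterating the step over the factors
    m_{2l}^{a_l}, starting from a factor with a_l <> 0, gives the theorem. *)

(** * Ordered sublists *)

Inductive sublist {A : Type} : list A -> list A -> Prop :=
| sublist_nil : sublist [] []
| sublist_skip : forall a l l', sublist l' l -> sublist l' (a :: l)
| sublist_keep : forall a l l', sublist l' l -> sublist (a :: l') (a :: l).

Lemma sublist_Forall {A} (P : A -> Prop) l l' :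
  sublist l' l -> Forall P l -> Forall P l'.
Proof. induction 1; intros HF; auto; inversion HF; subst; auto. Qed.

Lemma sublist_In {A} l l' (x : A) : sublist l' l -> In x l' -> In x l.
Proof. induction 1; simpl; intros; auto. destruct H0; auto. Qed.

Lemma sublist_ForallOrdPairs {A} (R : A -> A -> Prop) l l' :
  sublist l' l -> ForallOrdPairs R l -> ForallOrdPairs R l'.
Proof.
  induction 1 as [|a l l' Hs IH|a l l' Hs IH]; intros HR; auto; inversion HR; subst; auto.
  constructor; auto. eapply sublist_Forall; eauto.
Qed.

Lemma sublist_StronglySorted {A} (R : A -> A -> Prop) l l' :
  sublist l' l -> StronglySorted R l -> StronglySorted R l'.
Proof.
  induction 1; intros HS; auto; apply StronglySorted_inv in HS as [HS1 HS2]; auto.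
  constructor; auto. eapply sublist_Forall; eauto.
Qed.

Lemma sublist_app_inv {A} (l1 l2 l' : list A) : sublist l' (l1 ++ l2) ->
  exists u v, l' = u ++ v /\ sublist u l1 /\ sublist v l2.
Proof.
  revert l'; induction l1 as [|a l1 IH]; intros l' H; simpl in *.
  - exists [], l'; repeat split; auto; constructor.
  - inversion H; subst; destruct (IH _ H2) as [u [v [-> [Hu Hv]]]].
    + exists u, v; repeat split; auto; now apply sublist_skip.
    + exists (a :: u), v; repeat split; auto; now apply sublist_keep.
Qed.

Lemma sublist_concat_inv {A} (Fs : list (list A)) l' : sublist l' (concat Fs) ->
  exists Fs', Forall2 sublist Fs' Fs /\ concat Fs' = l'.
Proof.
  revert l'; induction Fs as [|F Fs IH]; intros l' H; simpl in *.
  - inversion H; subst. exists []; auto.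
  - apply sublist_app_inv in H as [u [v [-> [Hu Hv]]]].
    destruct (IH _ Hv) as [Fs' [HF <-]]. exists (u :: Fs'); auto.
Qed.

(** * Schreier families *)

Lemma Schreier_pos n L : Schreier n L -> Forall (le 1) L.
Proof.
  revert L; induction n; intros L H; simpl in H.
  - destruct H as [->|[a [Ha ->]]]; auto.
  - destruct H as [->|[_ [Fs [HF [<- _]]]]]; auto.
    apply Forall_concat. eapply Forall_impl; [|exact HF]. intros F [_ HF']; auto.
Qed.

Definition nonnil {A} (l : list A) : bool := match l with [] => false | _ => true end.

Lemma concat_filter_nonnil {A} (Fs : list (list A)) :
  concat (filter nonnil Fs) = concat Fs.
Proof. induction Fs as [|[|x F] Fs]; simpl; auto; congruence. Qed.

Lemma Schreier_hereditary n : forall L L', Schreier n L -> sublist L' L -> Schreier n L'.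
Proof.
  induction n; intros L L' H Hs; simpl in *.
  - destruct H as [->|[a [Ha ->]]]; inversion Hs as [|? ? ? H1|? ? ? H1]; subst; auto;
      inversion H1; subst; auto. right; exists a; auto.
  - destruct L' as [|b L'']; [now left|]. right.
    destruct H as [->|[HS [Fs [HF [Hc Hl]]]]]; [inversion Hs|].
    assert (HSS : StronglySorted lt L) by exact (Sorted_StronglySorted Nat.lt_trans HS).
    split; [apply StronglySorted_Sorted; eapply sublist_StronglySorted; eauto|].
    rewrite <- Hc in Hs. destruct (sublist_concat_inv _ _ Hs) as [Fs' [HFs' Hc']].
    exists (filter nonnil Fs'). split; [|split].
    + clear -HFs' HF IHn. induction HFs' as [|F' F Fs' Fs HF'F _ IH]; simpl; auto.
      inversion HF as [|? ? [_ HSF] HF0]; subst.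
      destruct F' as [|u F']; simpl; auto. constructor; [|auto].
      split; [congruence|]. eapply IHn; eauto.
    + rewrite concat_filter_nonnil; auto.
    + (* the minimum can only grow when passing to a subset *)
      assert (length (filter nonnil Fs') <= length Fs)%nat.
      { rewrite <- (Forall2_length HFs'). apply filter_length_le. }
      assert (hd 0%nat L <= b)%nat.
      { assert (Hb : In b L) by (rewrite <- Hc; eapply sublist_In; eauto; simpl; auto).
        destruct L as [|c L0]; simpl; [lia|]. destruct Hb as [->|Hb]; [lia|].
        apply StronglySorted_inv in HSS as [_ HSS]. rewrite Forall_forall in HSS.
        specialize (HSS _ Hb). lia. }
      simpl. lia.
Qed.

Lemma StronglySorted_app_r {A} (R : A -> A -> Prop) l1 l2 :
  StronglySorted R (l1 ++ l2) -> StronglySorted R l2.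
Proof. induction l1; simpl; auto. intros H; apply StronglySorted_inv in H; tauto. Qed.

Lemma heads_sorted Gs : Forall (fun G : list nat => G <> []) Gs ->
  StronglySorted lt (concat Gs) -> StronglySorted lt (map (hd 0%nat) Gs).
Proof.
  induction 1 as [|G Gs HG HGs IH]; simpl; intros HS; [constructor|].
  destruct G as [|a G']; [congruence|]. simpl in *.
  apply StronglySorted_inv in HS as [HS1 HS2]. constructor.
  - apply IH. eapply StronglySorted_app_r; eauto.
  - rewrite Forall_forall in *. intros y Hy. apply in_map_iff in Hy as [G'' [<- HG'']].
    apply HS2, in_or_app; right. apply in_concat. exists G''; split; auto.
    destruct G'' as [|u G'']; [specialize (HGs _ HG''); congruence|simpl; auto].
Qed.

Lemma heads_hd Gs : Forall (fun G : list nat => G <> []) Gs ->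
  hd 0%nat (map (hd 0%nat) Gs) = hd 0%nat (concat Gs).
Proof. destruct 1; simpl; auto. destruct x; simpl; congruence. Qed.

Lemma Schreier_decompose n m : forall L, Schreier (m + n) L -> exists Gs,
  Forall (fun G => G <> [] /\ Schreier n G) Gs /\ concat Gs = L /\
  Schreier m (map (hd 0%nat) Gs).
Proof.
  induction m; intros L H.
  - simpl in H. destruct L as [|a L0]; [exists []; simpl; auto|].
    exists [a :: L0]; simpl; split; [|split; [now rewrite app_nil_r|]].
    { constructor; auto. split; [congruence|auto]. }
    right; exists a; split; auto. apply Schreier_pos in H. inversion H; auto.
  - simpl in H. destruct H as [->|[HS [Fs [HF [Hc Hl]]]]]; [exists []; simpl; auto|].
    assert (exists Gss, Forall2 (fun Gs F => Forall (fun G => G <> [] /\ Schreier n G) Gs /\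
       concat Gs = F /\ Schreier m (map (hd 0%nat) Gs) /\ Gs <> []) Gss Fs) as [Gss HG].
    { clear Hc Hl. induction HF as [|F Fs [HF1 HF2] HFs IH]; [exists []; constructor|].
      destruct IH as [Gss IH]. destruct (IHm _ HF2) as [Gs [? [? ?]]].
      exists (Gs :: Gss); constructor; auto. repeat split; auto.
      intros ->; simpl in *; congruence. }
    assert (Hcc : concat (concat Gss) = L).
    { rewrite <- Hc. clear -HG. induction HG as [|Gs F Gss Fs [_ [H _]] _ IH]; simpl; auto.
      rewrite concat_app; congruence. }
    assert (HFa : Forall (fun G => G <> [] /\ Schreier n G) (concat Gss)).
    { apply Forall_concat. clear -HG. induction HG as [|? ? ? ? HH]; constructor; [apply HH|auto]. }
    assert (HFn : Forall (fun G : list nat => G <> []) (concat Gss)).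
    { eapply Forall_impl; [|exact HFa]. intros ? [? ?]; auto. }
    exists (concat Gss); repeat split; auto. simpl. right. split.
    + apply StronglySorted_Sorted, heads_sorted; auto. rewrite Hcc.
      exact (Sorted_StronglySorted Nat.lt_trans HS).
    + exists (map (map (hd 0%nat)) Gss). split; [|split].
      * clear -HG. induction HG as [|Gs F Gss Fs [_ [_ [H1 H2]]] _ IH]; simpl; constructor; auto.
        split; auto. destruct Gs; simpl; congruence.
      * rewrite concat_map; auto.
      * rewrite length_map, (Forall2_length HG), heads_hd, Hcc; auto.
Qed.

(** * Block sequences *)

Definition before (x y : functional) : Prop :=
  forall a b, x a <> 0 -> y b <> 0 -> (a < b)%nat.

Definition ismin (x : functional) (m : nat) : Prop :=
  x m <> 0 /\ forall i, (i < m)%nat -> x i = 0.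

Lemma block_iff xs : block xs <-> ForallOrdPairs before xs.
Proof.
  split.
  - induction xs as [|x xs IH]; intros Hb; constructor.
    + apply Forall_forall. intros y Hy. destruct (In_nth _ _ (fun _ => 0) Hy) as [j [Hj <-]].
      intros a b Ha Hb'. apply (Hb 0%nat (S j) a b); simpl; auto.
      split; [apply Nat.lt_0_succ|now apply (proj1 (Nat.succ_lt_mono _ _))].
    + apply IH. intros i j a b Hij. apply (Hb (S i) (S j) a b); simpl. lia.
  - induction 1 as [|x xs HF HO IH]; intros i j a b Hij Ha Hb; simpl in *; [lia|].
    destruct i, j; try lia.
    + rewrite Forall_forall in HF. apply (HF (nth j xs (fun _ => 0))); auto.
      apply nth_In; lia.
    + apply (IH i j a b); auto; lia.
Qed.

Lemma ForallOrdPairs_cross {A} (R : A -> A -> Prop) l1 l2 x y :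
  ForallOrdPairs R (l1 ++ l2) -> In x l1 -> In y l2 -> R x y.
Proof.
  induction l1; simpl; intros H Hx Hy; [tauto|]. inversion H as [|? ? HF]; subst.
  destruct Hx as [->|Hx]; auto. rewrite Forall_forall in HF. apply HF, in_or_app; auto.
Qed.

Lemma ForallOrdPairs_app_inv {A} (R : A -> A -> Prop) l1 l2 :
  ForallOrdPairs R (l1 ++ l2) -> ForallOrdPairs R l1 /\ ForallOrdPairs R l2.
Proof.
  induction l1 as [|a l1 IH]; simpl; intros H; [split; auto; constructor|].
  inversion H as [|? ? HF HO]; subst. destruct (IH HO) as [H1 H2]. split; auto.
  constructor; auto. rewrite Forall_forall in *. intros y Hy. apply HF, in_or_app; auto.
Qed.

Lemma ismin_MinsList xs L : Forall2 ismin xs L -> MinsList xs L.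
Proof. induction 1 as [|x m xs L [H1 H2]]; [constructor|apply ML_min; auto]. Qed.

(** * Linear combinations *)

Lemma lin_comb_cons b bs x xs n :
  lin_comb (b :: bs) (x :: xs) n = b * x n + lin_comb bs xs n.
Proof. reflexivity. Qed.

Lemma lin_comb_app bs1 bs2 xs1 xs2 n : length bs1 = length xs1 ->
  lin_comb (bs1 ++ bs2) (xs1 ++ xs2) n = lin_comb bs1 xs1 n + lin_comb bs2 xs2 n.
Proof.
  revert xs1; induction bs1; intros [|x xs1] H; simpl in *; try lia.
  - unfold lin_comb at 2; simpl; ring.
  - rewrite !lin_comb_cons, IHbs1; [ring|lia].
Qed.

Lemma lin_comb_scale c bs xs n :
  lin_comb (map (fun b => b * c) bs) xs n = c * lin_comb bs xs n.
Proof.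
  revert xs; induction bs; intros [|x xs]; simpl; try (unfold lin_comb; simpl; ring).
  rewrite !lin_comb_cons, IHbs. ring.
Qed.

Lemma lin_comb_supp bs xs n : lin_comb bs xs n <> 0 -> exists x, In x xs /\ x n <> 0.
Proof.
  revert xs; induction bs; intros [|x xs] H; try (unfold lin_comb in H; simpl in H; lra).
  rewrite lin_comb_cons in H. destruct (Req_EM_T (x n) 0) as [E|E].
  - destruct (IHbs xs) as [y [? ?]]; [rewrite E in H; lra|]. exists y; simpl; auto.
  - exists x; simpl; auto.
Qed.

Lemma lin_comb_zero bs xs n : (forall x, In x xs -> x n = 0) -> lin_comb bs xs n = 0.
Proof.
  intros H. destruct (Req_EM_T (lin_comb bs xs n) 0) as [|E]; auto.
  destruct (lin_comb_supp _ _ _ E) as [x [? ?]]. exfalso; auto.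
Qed.

(** * l_q sums *)

Definition sumpow (q : R) (bs : list R) : R := fold_right Rplus 0 (map (powabs q) bs).

Lemma Rpower_pos x y : 0 < Rpower x y.
Proof. apply exp_pos. Qed.

Lemma powabs_nonneg q b : 0 <= powabs q b.
Proof. unfold powabs; destruct (Req_EM_T b 0); [lra|]. left; apply Rpower_pos. Qed.

Lemma powabs_pos q b : b <> 0 -> 0 < powabs q b.
Proof. unfold powabs; destruct (Req_EM_T b 0); [tauto|]. intros; apply Rpower_pos. Qed.

Lemma sumpow_nonneg q bs : 0 <= sumpow q bs.
Proof. induction bs; unfold sumpow in *; simpl; [lra|]. pose proof (powabs_nonneg q a); lra. Qed.

Lemma sumpow_cons q b bs : sumpow q (b :: bs) = powabs q b + sumpow q bs.
Proof. reflexivity. Qed.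

Lemma sumpow_app q l1 l2 : sumpow q (l1 ++ l2) = sumpow q l1 + sumpow q l2.
Proof. induction l1; [unfold sumpow; simpl; ring|]. simpl; rewrite !sumpow_cons, IHl1; ring. Qed.

Lemma Rpower_inv_base x y : 0 < x -> Rpower (/ x) y = / Rpower x y.
Proof.
  intros Hx. unfold Rpower. rewrite ln_Rinv by exact Hx.
  rewrite <- exp_Ropp. f_equal. ring.
Qed.

Lemma sumpow_scale q c bs : 0 < c ->
  sumpow q (map (fun b => b * c) bs) = Rpower c q * sumpow q bs.
Proof.
  intros Hc. induction bs as [|b bs IH]; [unfold sumpow; simpl; ring|].
  simpl map. rewrite !sumpow_cons, IH. unfold powabs.
  destruct (Req_EM_T b 0) as [Hb|Hb], (Req_EM_T (b * c) 0) as [Hbc|Hbc].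
  - ring.
  - subst; exfalso; apply Hbc; ring.
  - exfalso. apply Rmult_integral in Hbc as [|]; [tauto|lra].
  - rewrite Rabs_mult, (Rabs_right c) by lra.
    rewrite <- Rpower_mult_distr; [ring|apply Rabs_pos_lt; auto|lra].
Qed.

(** * Pruning and chunking a sum *)

Lemma prune_zero_terms q : forall xs betas L, MinsList xs L -> length betas = length xs ->
  exists betas' xs' L', Forall (fun b => b <> 0) betas' /\ Forall2 ismin xs' L' /\
    sublist L' L /\ sublist xs' xs /\ length betas' = length xs' /\
    sumpow q betas' <= sumpow q betas /\
    forall n, lin_comb betas' xs' n = lin_comb betas xs n.
Proof.
  induction xs as [|x xs IH]; intros [|b bs] L HM Hl; simpl in Hl; try lia.
  - inversion HM; subst. exists [], [], [].
    repeat split; auto; try apply Rle_refl; constructor.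
  - pose proof (powabs_nonneg q b) as Hpb.
    inversion HM as [|x0 xs0 L0 Hz HM'|x0 xs0 L0 m Hm Hlt HM']; subst.
    + destruct (IH bs L HM' ltac:(lia)) as [b' [x' [L' [H1 [H2 [H3 [H4 [H5 [H6 H7]]]]]]]]].
      exists b', x', L'. repeat split; auto.
      * now apply sublist_skip.
      * rewrite sumpow_cons; lra.
      * intros n; rewrite lin_comb_cons, Hz, H7; ring.
    + destruct (IH bs L0 HM' ltac:(lia)) as [b' [x' [L' [H1 [H2 [H3 [H4 [H5 [H6 H7]]]]]]]]].
      destruct (Req_EM_T b 0) as [Hb0|Hb0].
      * exists b', x', L'. repeat split; auto; try now apply sublist_skip.
        -- rewrite sumpow_cons; lra.
        -- intros n; rewrite lin_comb_cons, Hb0, H7; ring.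
      * exists (b :: b'), (x :: x'), (m :: L'). repeat split; auto; try now apply sublist_keep.
        -- constructor; auto. split; auto.
        -- simpl; lia.
        -- rewrite !sumpow_cons; lra.
        -- intros n; rewrite !lin_comb_cons, H7; ring.
Qed.

Lemma Forall2_concat_r_inv {A B} (R : A -> B -> Prop) : forall Gs xs,
  Forall2 R xs (concat Gs) -> exists xss, xs = concat xss /\ Forall2 (Forall2 R) xss Gs.
Proof.
  induction Gs as [|G Gs IH]; intros xs H; simpl in H.
  - inversion H; subst. exists []; split; auto.
  - apply Forall2_app_inv_r in H as [l1 [l2 [H1 [H2 ->]]]].
    destruct (IH _ H2) as [xss [-> ?]]. exists (l1 :: xss); split; auto.
Qed.

Lemma split_as_concat {A B} : forall (xss : list (list B)) (bs : list A),
  length bs = length (concat xss) ->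
  exists bss, bs = concat bss /\ Forall2 (fun b x => length b = length x) bss xss.
Proof.
  induction xss as [|xs xss IH]; intros bs H; simpl in H.
  - destruct bs; simpl in H; try lia. exists []; split; auto.
  - rewrite length_app in H.
    destruct (IH (skipn (length xs) bs)) as [bss [Hb HF]]; [rewrite length_skipn; lia|].
    exists (firstn (length xs) bs :: bss); split.
    + simpl; rewrite <- Hb, firstn_skipn; auto.
    + constructor; auto. rewrite length_firstn; lia.
Qed.

(** * The closure property *)

Definition closed_under (q : R) (Ns : functional -> Prop) (D P : nat) : Prop :=
  forall betas xs, Forall Ns xs -> block xs -> admissible D xs ->
    length betas = length xs -> Ba q betas ->
    Ns (fun i => / INR P * lin_comb betas xs i).

Lemma Ns_ext (Ns : functional -> Prop) f g : Ns f -> (forall i, f i = g i) -> Ns g.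
Proof. intros H E. replace g with f; auto. apply functional_extensionality; auto. Qed.

(** A norming set contains 0, as the restriction of e_1^* to an empty interval. *)
Lemma norming_zero Ns : norming Ns -> Ns (fun _ => 0).
Proof.
  intros [_ [He [_ [_ Hr]]]].
  apply (Ns_ext _ (restrict 2 1 (ecoord 1))); [apply Hr, He; lia|].
  intros i; unfold restrict.
  destruct (Nat.leb_spec 2 i), (Nat.leb_spec i 1); simpl; auto; lia.
Qed.

Lemma normalize_chunk q Ns D P (Hq : 0 < q) (HP : closed_under q Ns D P) (HPpos : INR P <> 0)
  bs xs m G : length bs = length xs -> Forall2 ismin xs (m :: G) -> Schreier D (m :: G) ->
  Forall (fun b => b <> 0) bs -> Forall Ns xs -> ForallOrdPairs before xs ->
  exists g y, 0 < g /\ powabs q g = sumpow q bs /\ Ns y /\ ismin y m /\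
    (forall n, y n <> 0 -> exists x, In x xs /\ x n <> 0) /\
    forall n, g * y n = / INR P * lin_comb bs xs n.
Proof.
  intros Hl Hm HS Hb HN HO.
  inversion Hm as [|x1 m0 rest G0 Hx1 Hrest]; subst.
  destruct bs as [|b1 bs]; [discriminate|].
  pose proof (Forall_inv Hb) as Hb1.
  set (S := sumpow q (b1 :: bs)).
  assert (HSpos : 0 < S).
  { unfold S; rewrite sumpow_cons.
    pose proof (powabs_pos q b1 Hb1); pose proof (sumpow_nonneg q bs); lra. }
  set (g := Rpower S (/ q)).
  assert (Hg : 0 < g) by apply Rpower_pos.
  assert (HgS : Rpower g q = S) by (unfold g; rewrite Rpower_mult, Rinv_l, Rpower_1; lra).
  set (y := fun i => / INR P * lin_comb (map (fun b => b * / g) (b1 :: bs)) (x1 :: rest) i).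
  assert (Hrest0 : forall i, (i <= m)%nat -> forall x, In x rest -> x i = 0).
  { intros i Hi x Hx. destruct (Req_EM_T (x i) 0) as [|Hn]; auto. exfalso.
    inversion HO as [|? ? HF1 _]; subst. rewrite Forall_forall in HF1.
    specialize (HF1 x Hx m i (proj1 Hx1) Hn). lia. }
  exists g, y. repeat split; auto.
  - unfold powabs. destruct Req_EM_T; [lra|]. now rewrite Rabs_right, HgS by lra.
  - apply HP; auto.
    + now apply block_iff.
    + exists (m :: G); split; auto. now apply ismin_MinsList.
    + rewrite length_map; auto.
    + unfold Ba. change (sumpow q (map (fun b => b * / g) (b1 :: bs)) <= 1).
      rewrite sumpow_scale, Rpower_inv_base, HgS by (auto; apply Rinv_0_lt_compat; auto).
      fold S. rewrite Rinv_l; lra.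
  - unfold y; simpl map. rewrite lin_comb_cons, (lin_comb_zero _ rest m), Rplus_0_r
      by (intros; apply Hrest0; auto).
    repeat apply Rmult_integral_contrapositive_currified; auto using Rinv_neq_0_compat.
    + now apply Rinv_neq_0_compat, Rgt_not_eq.
    + exact (proj1 Hx1).
  - intros i Hi. unfold y. rewrite lin_comb_zero; [ring|].
    intros x [<-|Hx]; [apply (proj2 Hx1); auto|apply Hrest0; auto; lia].
  - intros n Hn. apply (lin_comb_supp (map (fun b => b * / g) (b1 :: bs))).
    intros E; apply Hn; unfold y; rewrite E; ring.
  - intros n. unfold y. rewrite lin_comb_scale. field. lra.
Qed.

Lemma combine_chunks q Ns D P (Hq : 0 < q) (HP : closed_under q Ns D P) (HPpos : INR P <> 0) :
 forall Gs bss xss,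
  Forall2 (fun bs xs => length bs = length xs) bss xss ->
  Forall2 (Forall2 ismin) xss Gs ->
  Forall (fun G => G <> [] /\ Schreier D G) Gs ->
  Forall (fun b => b <> 0) (concat bss) ->
  Forall Ns (concat xss) ->
  ForallOrdPairs before (concat xss) ->
  exists gs ys, length gs = length ys /\ sumpow q gs = sumpow q (concat bss) /\
   Forall Ns ys /\ Forall2 ismin ys (map (hd 0%nat) Gs) /\ ForallOrdPairs before ys /\
   (forall n y, In y ys -> y n <> 0 -> exists x, In x (concat xss) /\ x n <> 0) /\
   forall n, lin_comb gs ys n = / INR P * lin_comb (concat bss) (concat xss) n.
Proof.
  induction Gs as [|G Gs IH]; intros bss xss Hl Hm HG Hb HN HO.
  - inversion Hm; subst. inversion Hl; subst. exists [], [].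
    repeat split; try constructor.
    + intros n y [].
    + intros n; unfold lin_comb; simpl; ring.
  - inversion Hm as [|xs G0 xss' Gs0 Hmc Hm']; subst.
    inversion Hl as [|bs xs0 bss' xss0 Hlc Hl']; subst.
    inversion HG as [|G1 Gs1 [HGne HGs] HG']; subst.
    rewrite concat_cons in Hb, HN, HO.
    apply Forall_app in Hb as [Hb1 Hb2]. apply Forall_app in HN as [HN1 HN2].
    apply ForallOrdPairs_app_inv in HO as HO12. destruct HO12 as [HO1 HO2].
    destruct (IH bss' xss' Hl' Hm' HG' Hb2 HN2 HO2)
      as [gs [ys [I1 [I2 [I3 [I4 [I5 [I6 I7]]]]]]]].
    destruct G as [|m G']; [congruence|].
    destruct (normalize_chunk q Ns D P Hq HP HPpos bs xs m G' Hlc Hmc HGs Hb1 HN1 HO1)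
      as [g [y [_ [J2 [J3 [J4 [J5 J6]]]]]]].
    exists (g :: gs), (y :: ys). repeat split.
    + simpl; lia.
    + now rewrite sumpow_cons, I2, concat_cons, sumpow_app, J2.
    + now constructor.
    + now constructor.
    + (* y is supported in the current chunk, ys in the later ones *)
      constructor; auto. apply Forall_forall; intros y' Hy' a b Ha Hb.
      destruct (J5 a Ha) as [x [Hx Hxa]]. destruct (I6 b y' Hy' Hb) as [x' [Hx' Hx'b]].
      apply (ForallOrdPairs_cross _ _ _ x x' HO Hx Hx' a b Hxa Hx'b).
    + intros n y0 [<-|Hy0] Hn.
      * destruct (J5 n Hn) as [x [? ?]]; exists x; split; auto; apply in_or_app; auto.
      * destruct (I6 n y0 Hy0 Hn) as [x [? ?]]; exists x; split; auto; apply in_or_app; auto.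
    + intros n. rewrite lin_comb_cons, I7, !concat_cons, lin_comb_app, J6 by auto. ring.
Qed.

Lemma closed_base p q M Nn Ns j : MNq_Schreier p q M Nn Ns -> (1 <= j)%nat ->
  closed_under q Ns (Nn (2 * j)%nat) (M (2 * j)%nat).
Proof.
  intros [Hn [HNk _]] Hj betas xs HF Hb Ha Hl HB.
  destruct xs as [|x xs'].
  - destruct betas; simpl in Hl; try lia.
    eapply Ns_ext; [apply (norming_zero _ Hn)|]. intros i; unfold lin_comb; simpl; ring.
  - apply (HNk j); auto. exists betas, (x :: xs').
    repeat split; auto; simpl; lia.
Qed.

Lemma closed_step p q M Nn Ns j D P : 0 < q -> MNq_Schreier p q M Nn Ns -> (1 <= j)%nat ->
  (0 < P)%nat -> closed_under q Ns D P ->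
  closed_under q Ns (Nn (2 * j)%nat + D) (M (2 * j)%nat * P).
Proof.
  intros Hq HNs Hj HPpos HP betas xs HF Hb [L [HML HS]] Hl HB.
  assert (HP0 : INR P <> 0) by (apply not_0_INR; lia).
  destruct (prune_zero_terms q xs betas L HML Hl)
    as [b' [x' [L' [P1 [P2 [P3 [P4 [P5 [P6 P7]]]]]]]]].
  assert (HS' : Schreier (Nn (2 * j)%nat + D) L') by (eapply Schreier_hereditary; eauto).
  destruct (Schreier_decompose D (Nn (2 * j)%nat) L' HS') as [Gs [G1 [<- G3]]].
  destruct (Forall2_concat_r_inv _ _ _ P2) as [xss [-> Hxss]].
  destruct (split_as_concat xss b' P5) as [bss [-> Hbss]].
  destruct (combine_chunks q Ns D P Hq HP HP0 Gs bss xss Hbss Hxss G1 P1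
              (sublist_Forall _ _ _ P4 HF)
              (sublist_ForallOrdPairs _ _ _ P4 (proj1 (block_iff xs) Hb)))
    as [gs [ys [C1 [C2 [C3 [C4 [C5 [_ C7]]]]]]]].
  (* the recombined sum is an S_{n_{2j}}-admissible combination, hence in N_j *)
  apply (Ns_ext _ (fun i => / INR (M (2 * j)%nat) * lin_comb gs ys i)).
  - apply (closed_base p q M Nn Ns j HNs Hj); auto.
    + now apply block_iff.
    + exists (map (hd 0%nat) Gs); split; auto. now apply ismin_MinsList.
    + unfold Ba in *. change (sumpow q gs <= 1). change (sumpow q betas <= 1) in HB. lra.
  - intros i. rewrite C7, <- P7, mult_INR, Rinv_mult. ring.
Qed.

Lemma closed_pow p q M Nn Ns j D P : 0 < q -> MNq_Schreier p q M Nn Ns -> (1 <= j)%nat ->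
  (0 < M (2 * j)%nat)%nat -> (0 < P)%nat -> closed_under q Ns D P ->
  forall c, closed_under q Ns (c * Nn (2 * j) + D)%nat (M (2 * j)%nat ^ c * P)%nat.
Proof.
  intros Hq HNs Hj HM HPpos HP c. induction c as [|c IH].
  - now rewrite Nat.mul_0_l, Nat.pow_0_r, Nat.mul_1_l.
  - replace (S c * Nn (2 * j) + D)%nat with (Nn (2 * j) + (c * Nn (2 * j) + D))%nat by lia.
    rewrite Nat.pow_succ_r', <- Nat.mul_assoc.
    apply closed_step with (p := p); auto.
    apply Nat.mul_pos_pos; auto. apply Nat.neq_0_lt_0, Nat.pow_nonzero; lia.
Qed.

Lemma nsum_S lo len f : nsum lo (S len) f = (f lo + nsum (S lo) len f)%nat.
Proof. reflexivity. Qed.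

Lemma nprod_S lo len f : nprod lo (S len) f = (f lo * nprod (S lo) len f)%nat.
Proof. reflexivity. Qed.

Lemma nprod_pos (M a : nat -> nat) : (forall i, (1 <= i)%nat -> (0 < M i)%nat) ->
  forall len lo, (1 <= lo)%nat -> (0 < nprod lo len (fun l => M (2 * l) ^ a l))%nat.
Proof.
  intros HM; induction len as [|len IH]; intros lo Hlo; [cbv; lia|].
  rewrite nprod_S. apply Nat.mul_pos_pos; [|apply IH; lia].
  apply Nat.neq_0_lt_0, Nat.pow_nonzero. specialize (HM (2 * lo)%nat). lia.
Qed.

Section Closure.
Variables (p q : R) (M Nn : nat -> nat) (Ns : functional -> Prop) (a : nat -> nat).
Hypothesis Hq : 0 < q.
Hypothesis HNs : MNq_Schreier p q M Nn Ns.
Hypothesis HM : forall i, (1 <= i)%nat -> (0 < M i)%nat.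

Lemma closed_range D P : (0 < P)%nat -> closed_under q Ns D P ->
  forall len lo, (1 <= lo)%nat ->
  closed_under q Ns (nsum lo len (fun l => a l * Nn (2 * l)) + D)%nat
                    (nprod lo len (fun l => M (2 * l) ^ a l) * P)%nat.
Proof.
  intros HPpos HP; induction len as [|len IH]; intros lo Hlo.
  { unfold nsum, nprod; simpl. now rewrite Nat.add_0_r. }
  rewrite nsum_S, nprod_S, <- Nat.add_assoc, <- Nat.mul_assoc.
  apply closed_pow with (p := p); auto.
  - apply HM; lia.
  - apply Nat.mul_pos_pos; auto. apply nprod_pos; auto; lia.
Qed.

Lemma closed_range_nonzero : forall len lo, (1 <= lo)%nat ->
  (exists l, (lo <= l < lo + len)%nat /\ a l <> 0%nat) ->
  closed_under q Ns (nsum lo len (fun l => a l * Nn (2 * l)))%nat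
                    (nprod lo len (fun l => M (2 * l) ^ a l))%nat.
Proof.
  induction len as [|len IH]; intros lo Hlo [l [Hl Hal]]; [lia|].
  rewrite nsum_S, nprod_S. destruct (a lo) as [|c] eqn:Halo.
  - (* the first factor is trivial; the nonzero exponent lies further on *)
    rewrite Nat.mul_0_l, Nat.add_0_l, Nat.pow_0_r, Nat.mul_1_l.
    apply IH; [lia|]. exists l; split; auto.
    destruct (Nat.eq_dec l lo); [congruence|lia].
  - (* m_{2lo} itself, then the remaining factors, then m_{2lo}^c *)
    pose proof (closed_base p q M Nn Ns lo HNs Hlo) as Hbase.
    pose proof (closed_range _ _ (HM (2 * lo)%nat ltac:(lia)) Hbase len (S lo) ltac:(lia))
      as Htail.
    replace (S c * Nn (2 * lo) + nsum (S lo) len (fun l => a l * Nn (2 * l)))%nat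
      with (c * Nn (2 * lo) + (nsum (S lo) len (fun l => a l * Nn (2 * l)) + Nn (2 * lo)))%nat
      by lia.
    replace (M (2 * lo) ^ S c * nprod (S lo) len (fun l => M (2 * l) ^ a l))%nat
      with (M (2 * lo) ^ c * (nprod (S lo) len (fun l => M (2 * l) ^ a l) * M (2 * lo)))%nat
      by (rewrite Nat.pow_succ_r'; ring).
    apply closed_pow with (p := p); auto; [apply HM; lia|].
    apply Nat.mul_pos_pos; [apply nprod_pos; auto|apply HM]; lia.
Qed.

End Closure.

Theorem mainTheorem7 (p q : R) (M Nn : nat -> nat) (Ns : functional -> Prop)
  (k : nat) (a : nat -> nat) (xs : list functional) (betas : list R) :
  1 < p -> 1 < q -> / p + / q = 1 ->
  MN_cond M Nn ->
  MNq_Schreier p q M Nn Ns ->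
  (2 <= k)%nat ->
  (exists l, (1 <= l < k)%nat /\ a l <> 0%nat) ->
  Forall Ns xs ->
  block xs ->
  admissible (nsum 1 (k - 1) (fun l => a l * Nn (2 * l)))%nat xs ->
  length betas = length xs ->
  Ba q betas ->
  Ns (fun i => / INR (nprod 1 (k - 1) (fun l => M (2 * l) ^ a l))%nat
               * lin_comb betas xs i).
Proof.
  intros Hp Hq _ HMN HNs Hk [l [Hl Hal]] HF Hb Had Hlen HB.
  assert (HM : forall i, (1 <= i)%nat -> (0 < M i)%nat) by (intros i Hi; apply (proj1 HMN i Hi)).
  assert (Hclosed : closed_under q Ns (nsum 1 (k - 1) (fun l => a l * Nn (2 * l)))%nat
                                  (nprod 1 (k - 1) (fun l => M (2 * l) ^ a l))%nat).
  { apply (closed_range_nonzero p q M Nn Ns a); auto; [lra|].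
    exists l; split; [|exact Hal]. lia. }
  exact (Hclosed betas xs HF Hb Had Hlen HB).
Qed.
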